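(* Let $n$ be a positive integer and consider the function $f(m)=\binom{n}{m}m^3$ defined for integers $0\le m\le n$. Then $f$ is maximized at $m=\lceil n/2\rceil+1$ if $n\ge 2$, and at $m=1$ if $n=1$. *)

From mathcomp Require Import all_boot.
Set Implicit Arguments. Unset Strict Implicit. Unset Printing Implicit Defensive.

Definition fbin (n m : nat) : nat := 'C(n, m) * m ^ 3.

Definition ceil_half (n : nat) : nat := (n + 1) %/ 2.

Definition is_maximizer (n m0 : nat) : Prop :=
  m0 <= n /\ forall m, m <= n -> fbin n m <= fbin n m0.

(* The ratio f(m+1)/f(m) = (n - m)(m + 1)^2 / m^3 is at least 1 exactly up to
   about m = n/2 + 1 and at most 1 beyond, so f is unimodal and its maximum
   sits at the last index where the ratio is still at least 1. *)
From mathcomp Require Import all_boot.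
From mathcomp Require Import zify.

Lemma unimodal_max (f : nat -> nat) (k : nat) :
  (forall m, m < k -> f m <= f m.+1) ->
  (forall m, k <= m -> f m.+1 <= f m) ->
  forall m, f m <= f k.
Proof.
move=> f_up f_down m; case: (leqP m k) => [le_mk | /ltnW le_km].
- have f_mono : {in [pred i | i <= k] &, {homo f : i j / i <= j}}.
    apply: (homo_leq_in (r := leq)) => [//|y x z|i j _ j_le_k l|i _].
    + exact: leq_trans.
    + by move=> /andP[_ lt_lj]; rewrite !inE /= in j_le_k *; lia.
    + by rewrite inE; exact: f_up.
  by apply: f_mono; rewrite ?inE.
- have f_anti : {in [pred i | k <= i] &, {homo f : i j / i <= j >-> j <= i}}.
    apply: (homo_leq_in (r := fun i j => j <= i)) => [//|y x z le_yx le_zy|i j k_le_i _ l|i k_le_i _].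
    + exact: leq_trans le_zy le_yx.
    + by move=> /andP[lt_il _]; rewrite !inE /= in k_le_i *; lia.
    + exact: f_down.
  by apply: f_anti; rewrite ?inE.
Qed.

Lemma fbinS_mul n m : fbin n m.+1 * m ^ 3 = fbin n m * ((n - m) * m.+1 ^ 2).
Proof.
rewrite /fbin; have mul_bin := mul_bin_left n m.
set c := 'C(n, m.+1) in mul_bin *.
have -> : c * m.+1 ^ 3 * m ^ 3 = (m.+1 * c) * (m.+1 ^ 2 * m ^ 3).
  by rewrite !expnS !expn0 !muln1; lia.
by rewrite mul_bin !expnS !expn0 !muln1; lia.
Qed.

Lemma fbin_leS n m : m < n -> 2 * m <= n + 1 -> fbin n m <= fbin n m.+1.
Proof.
case: m => [|m] lt_mn le_2m; first by rewrite /fbin muln0.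
have ratio_ge1 : m.+1 ^ 3 <= (n - m.+1) * m.+2 ^ 2.
  by rewrite !expnS !expn0 !muln1; nia.
have m3_gt0 : 0 < m.+1 ^ 3 by rewrite expn_gt0.
by rewrite -(leq_pmul2r m3_gt0) fbinS_mul leq_mul.
Qed.

Lemma fbinS_le n m : 0 < m -> n + 2 <= 2 * m -> fbin n m.+1 <= fbin n m.
Proof.
move=> m_gt0 le_n_2m.
have ratio_le1 : (n - m) * m.+1 ^ 2 <= m ^ 3.
  have le_nm : n - m <= m - 2 by lia.
  (* (m - 2)(m + 1)^2 = m^3 - 3m - 2 once m >= 2; small m are checked apart
     because of truncated subtraction. *)
  apply: leq_trans (leq_mul le_nm (leqnn _)) _.
  by case: m m_gt0 le_n_2m le_nm => [|[|[|m]]] //= *; rewrite !expnS !expn0 !muln1; nia.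
have m3_gt0 : 0 < m ^ 3 by rewrite expn_gt0 m_gt0.
by rewrite -(leq_pmul2r m3_gt0) fbinS_mul leq_mul.
Qed.

Theorem proposition2 (n : nat) (hn : 0 < n) :
  is_maximizer n (if 2 <= n then ceil_half n + 1 else 1).
Proof.
case: ifP => [n_ge2 | n_lt2]; last first.
  have -> : n = 1 by lia.
  by split=> // [[|[|]]].
rewrite /ceil_half; split; first by lia.
move=> m _; apply: unimodal_max => i lt_i.
- by apply: fbin_leS; lia.
- by apply: fbinS_le; lia.
Qed.
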